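(* Let $\mathcal{C}$ be a category with finite products that has an exponentiable parametrised natural numbers object $N$. (1) A midpoint object $(A,m)$ in $\mathcal{C}$ is iterative if and only if there exists a map $M\colon A^N\to A$ satisfying (Unfolding) $M_i\,x_i = m(x_0, M_i\,x_{i+1})$, and (Canonicity) whenever $(x_i)$ and $(y_i)$ are sequences with $y_i=m(x_i,y_{i+1})$ for all $i$, then $y_0=M_i\,x_i$. Moreover, if $(A,m)$ is iterative then there is a unique map $M\colon A^N\to A$ satisfying Unfolding. (2) If $(A,m)$ and $(A',m')$ are iterative midpoint objects with associated maps $M, M'$ (the unique ones satisfying Unfolding), then every midpoint homomorphism $f\colon A\to A'$ satisfies $f(M_i\,x_i)=M'_i\,f(x_i)$ for all sequences $(x_i)$.
   Context: All equations are between generalised elements (maps into the object from an arbitrary object $Z$); sequences $(x_i)$ of generalised elements of $A$ mean generalised elements of $A^N$, and $M_i\,x_i$ denotes $M((x_i))$. A parametrised natural numbers object is an object $N$ with $0\colon 1\to N$, $s\colon N\to N$ such that for all objects $P,X$ and maps $a\colon P\to X$, $f\colon P\times X\to X$ there is a unique $g\colon P\times N\to X$ with $g(p,0)=a(p)$, $g(p,n+1)=f(p,g(p,n))$. A midpoint object is a pair $(A,m)$ with $m\colon A\times A\to A$ satisfying idempotency $m(x,x)=x$, commutativity $m(x,y)=m(y,x)$ and transposition $m(m(x,y),m(z,w))=m(m(x,z),m(y,w))$. A homomorphism of midpoint objects is a map $h$ with $h(m(x,y))=m'(h(x),h(y))$. $(A,m)$ is iterative if for every map $c\colon X\to A\times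 X$ there is a unique map $u\colon X\to A$ with $m\circ(\mathrm{id}_A\times u)\circ c = u$. *)

Set Implicit Arguments.
Unset Strict Implicit.

Record Cat := {
  ob :> Type;
  hom : ob -> ob -> Type;
  idm : forall A, hom A A;
  comp : forall A B C, hom B C -> hom A B -> hom A C;
  comp_id_l : forall A B (f : hom A B), comp (idm B) f = f;
  comp_id_r : forall A B (f : hom A B), comp f (idm A) = f;
  comp_assoc : forall A B C D (h : hom C D) (g : hom B C) (f : hom A B),
      comp h (comp g f) = comp (comp h g) f
}.
Arguments hom {c} _ _.
Arguments idm {c} A.
Arguments comp {c A B C} _ _.
Infix "⊚" := comp (at level 40, left associativity).

Record FinProd (C : Cat) : Type := {
  one : C;
  bang : forall A : C, hom A one;
  bang_unique : forall (A : C) (f : hom A one), f = bang A;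
  prod : C -> C -> C;
  p1 : forall A B : C, hom (prod A B) A;
  p2 : forall A B : C, hom (prod A B) B;
  pair : forall Z A B : C, hom Z A -> hom Z B -> hom Z (prod A B);
  p1_pair : forall Z A B (f : hom Z A) (g : hom Z B), p1 A B ⊚ pair f g = f;
  p2_pair : forall Z A B (f : hom Z A) (g : hom Z B), p2 A B ⊚ pair f g = g;
  pair_unique : forall Z A B (h : hom Z (prod A B)),
      h = pair (p1 A B ⊚ h) (p2 A B ⊚ h)
}.
Arguments one {C} f0.
Arguments bang {C} f0 A.
Arguments prod {C} f0 _ _.
Arguments p1 {C} f0 {A B}.
Arguments p2 {C} f0 {A B}.
Arguments pair {C} f0 {Z A B} _ _.

Section Defs.
Variables (C : Cat) (P : FinProd C).

Definition fprod (A B A' B' : C) (f : hom A A') (g : hom B B')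
  : hom (prod P A B) (prod P A' B') :=
  pair P (f ⊚ p1 P) (g ⊚ p2 P).

(* Parametrised natural numbers object (in generalised elements):
   for all a : P0 -> X, f : P0 x X -> X there is a unique
   g : P0 x N -> X with g(p,0) = a(p), g(p,n+1) = f(p,g(p,n)). *)
Definition is_PNNO (N : C) (z : hom (one P) N) (s : hom N N) : Prop :=
  forall (P0 X : C) (a : hom P0 X) (f : hom (prod P P0 X) X),
    exists! g : hom (prod P P0 N) X,
      (forall (Z : C) (p : hom Z P0),
          g ⊚ pair P p (z ⊚ bang P Z) = a ⊚ p) /\
      (forall (Z : C) (p : hom Z P0) (n : hom Z N),
          g ⊚ pair P p (s ⊚ n) = f ⊚ pair P p (g ⊚ pair P p n)).

Record Exponentials (N : C) := {
  expo : C -> C;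
  ev : forall A : C, hom (prod P (expo A) N) A;
  lam : forall Z A : C, hom (prod P Z N) A -> hom Z (expo A);
  ev_lam : forall Z A (f : hom (prod P Z N) A),
      ev A ⊚ fprod (lam f) (idm N) = f;
  lam_unique : forall Z A (f : hom (prod P Z N) A) (g : hom Z (expo A)),
      ev A ⊚ fprod g (idm N) = f -> g = lam f
}.

Section Midpoint.
Variables (A : C) (m : hom (prod P A A) A).

Definition is_midpoint : Prop :=
  (forall Z (x : hom Z A), m ⊚ pair P x x = x) /\
  (forall Z (x y : hom Z A), m ⊚ pair P x y = m ⊚ pair P y x) /\
  (forall Z (x y u w : hom Z A),
      m ⊚ pair P (m ⊚ pair P x y) (m ⊚ pair P u w)
      = m ⊚ pair P (m ⊚ pair P x u) (m ⊚ pair P y w)).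

Definition iterative : Prop :=
  forall (X : C) (c : hom X (prod P A X)),
    exists! u : hom X A, m ⊚ fprod (idm A) u ⊚ c = u.
End Midpoint.

Definition is_midpoint_hom (A A' : C) (m : hom (prod P A A) A)
  (m' : hom (prod P A' A') A') (f : hom A A') : Prop :=
  forall Z (x y : hom Z A), f ⊚ (m ⊚ pair P x y) = m' ⊚ pair P (f ⊚ x) (f ⊚ y).

Section Sequences.
Variables (N : C) (z : hom (one P) N) (s : hom N N) (E : Exponentials N).

Definition at_ (A Z : C) (x : hom Z (expo E A)) (i : hom Z N) : hom Z A :=
  ev E A ⊚ pair P x i.

Definition head (A Z : C) (x : hom Z (expo E A)) : hom Z A :=
  at_ x (z ⊚ bang P Z).

Definition shift (A Z : C) (x : hom Z (expo E A)) : hom Z (expo E A) :=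
  lam E (ev E A ⊚ pair P (x ⊚ p1 P) (s ⊚ p2 P)).

Definition mapseq (A A' Z : C) (f : hom A A') (x : hom Z (expo E A))
  : hom Z (expo E A') :=
  lam E (f ⊚ (ev E A ⊚ fprod x (idm N))).

Definition unfolding (A : C) (m : hom (prod P A A) A) (M : hom (expo E A) A)
  : Prop :=
  forall Z (x : hom Z (expo E A)),
    M ⊚ x = m ⊚ pair P (head x) (M ⊚ shift x).

(* Canonicity: if y_i = m(x_i, y_{i+1}) for all i, then y_0 = M_i x_i.
   "for all i" is read in generalised elements: for every stage W -> Z and
   every index i : W -> N. *)
Definition canonicity (A : C) (m : hom (prod P A A) A) (M : hom (expo E A) A)
  : Prop :=
  forall Z (x y : hom Z (expo E A)),
    (forall W (w : hom W Z) (i : hom W N),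
        at_ (y ⊚ w) i = m ⊚ pair P (at_ (x ⊚ w) i) (at_ (y ⊚ w) (s ⊚ i))) ->
    head y = M ⊚ x.
End Sequences.
End Defs.


(* The sequence object A^N carries the coalgebra <head, shift> : A^N -> A x A^N,
   and Unfolding says exactly that M solves the iteration equation
   u = m o (id x u) o c for this coalgebra; iterativity thus yields a unique M.
   Whenever h : X -> A^N satisfies head o h = p1 o c and shift o h = h o p2 o c,
   the map M o h solves the equation for c.  Every c has such an h, its
   trajectory, so Unfolding gives solutions; Canonicity, applied to the
   trajectory and to the values of a solution along it, gives their uniqueness.
   Conversely, for iterative m both (p, i) |-> y_i and (p, i) |-> M (x_{i+j})_j
   solve the equation of (p, i) |-> (x_i, (p, i+1)) on Z x N, whence Canonicity;
   and for a homomorphism f both f o M and M' o f^N solve the equation of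
   <f o head, shift>.  None of the midpoint laws is needed. *)
Set Implicit Arguments.
Unset Strict Implicit.

Section Products.
Variables (C : Cat) (P : FinProd C).

Lemma pair_comp (X Y A B : C) (f : hom Y A) (g : hom Y B) (h : hom X Y) :
  pair P f g ⊚ h = pair P (f ⊚ h) (g ⊚ h).
Proof.
  rewrite (pair_unique (pair P f g ⊚ h)), !comp_assoc, p1_pair, p2_pair.
  reflexivity.
Qed.

Lemma pair_eta (X A B : C) (h : hom X (prod P A B)) :
  pair P (p1 P ⊚ h) (p2 P ⊚ h) = h.
Proof. symmetry; apply pair_unique. Qed.

Lemma pair_p1_p2 (A B : C) : pair P (p1 P (A:=A) (B:=B)) (p2 P) = idm _.
Proof. rewrite <- (pair_eta (idm _)), !comp_id_r; reflexivity. Qed.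

Lemma bang_comp (X Y : C) (h : hom X Y) : bang P Y ⊚ h = bang P X.
Proof. apply bang_unique. Qed.
End Products.

Ltac simpl_prod := repeat (first
  [ rewrite <- comp_assoc | rewrite pair_comp | rewrite p1_pair
  | rewrite p2_pair | rewrite comp_id_l | rewrite comp_id_r | rewrite bang_comp
  | rewrite pair_p1_p2 | progress unfold fprod ]).

Section Exponential.
Variables (C : Cat) (P : FinProd C) (N : C) (E : Exponentials P N).

Lemma ev_pair_lam_comp (Z A Y : C) (f : hom (prod P Z N) A) (a : hom Y Z)
    (b : hom Y N) :
  ev E A ⊚ pair P (lam E f ⊚ a) b = f ⊚ pair P a b.
Proof.
  assert (Hfac : pair P (lam E f ⊚ a) b = fprod P (lam E f) (idm N) ⊚ pair P a b)
    by (simpl_prod; reflexivity).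
  rewrite Hfac, comp_assoc, ev_lam; reflexivity.
Qed.

Lemma ev_pair_lam (Z A : C) (f : hom (prod P Z N) A) (b : hom Z N) :
  ev E A ⊚ pair P (lam E f) b = f ⊚ pair P (idm Z) b.
Proof. rewrite <- (comp_id_r (lam E f)). apply ev_pair_lam_comp. Qed.

Lemma lam_comp (Z Y A : C) (f : hom (prod P Z N) A) (h : hom Y Z) :
  lam E f ⊚ h = lam E (f ⊚ fprod P h (idm N)).
Proof.
  apply lam_unique. unfold fprod at 1.
  rewrite <- comp_assoc, ev_pair_lam_comp. simpl_prod. reflexivity.
Qed.

Lemma at_comp (Z Y A : C) (x : hom Z (expo E A)) (i : hom Z N) (h : hom Y Z) :
  at_ x i ⊚ h = at_ (x ⊚ h) (i ⊚ h).
Proof. unfold at_. simpl_prod. reflexivity. Qed.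

Lemma expo_ext (Z A : C) (g1 g2 : hom Z (expo E A)) :
  ev E A ⊚ pair P (g1 ⊚ p1 P) (p2 P) = ev E A ⊚ pair P (g2 ⊚ p1 P) (p2 P) ->
  g1 = g2.
Proof.
  intro Hev.
  rewrite (lam_unique (g := g1) (eq_refl _)), (lam_unique (g := g2) (eq_refl _)).
  unfold fprod. rewrite !comp_id_l, Hev. reflexivity.
Qed.
End Exponential.

Ltac simpl_expo := repeat (first
  [ progress simpl_prod | rewrite ev_pair_lam_comp | rewrite ev_pair_lam ]).

Section Recursion.
Variables (C : Cat) (P : FinProd C) (N : C) (z : hom (one P) N) (s : hom N N)
  (HN : is_PNNO z s).

Lemma pnno_rec_unique (P0 X : C) (a : hom P0 X) (f : hom (prod P P0 X) X)
    (g1 g2 : hom (prod P P0 N) X) :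
  (forall Z (p : hom Z P0), g1 ⊚ pair P p (z ⊚ bang P Z) = a ⊚ p) ->
  (forall Z (p : hom Z P0) (n : hom Z N),
      g1 ⊚ pair P p (s ⊚ n) = f ⊚ pair P p (g1 ⊚ pair P p n)) ->
  (forall Z (p : hom Z P0), g2 ⊚ pair P p (z ⊚ bang P Z) = a ⊚ p) ->
  (forall Z (p : hom Z P0) (n : hom Z N),
      g2 ⊚ pair P p (s ⊚ n) = f ⊚ pair P p (g2 ⊚ pair P p n)) ->
  g1 = g2.
Proof.
  intros H10 H1S H20 H2S. destruct (HN a f) as [g [_ Hg]].
  rewrite <- (Hg g1), <- (Hg g2); split; assumption.
Qed.

Definition iterates (X : C) (g : hom X X) (it : hom (prod P X N) X) : Prop :=
  (forall Z (x : hom Z X), it ⊚ pair P x (z ⊚ bang P Z) = x) /\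
  (forall Z (x : hom Z X) (n : hom Z N),
      it ⊚ pair P x (s ⊚ n) = g ⊚ (it ⊚ pair P x n)).

Lemma iterates_exists (X : C) (g : hom X X) : exists it, iterates g it.
Proof.
  destruct (HN (idm X) (g ⊚ p2 P)) as [it [[H0 HS] _]].
  exists it. split; intros.
  - rewrite H0. apply comp_id_l.
  - rewrite HS. simpl_prod. reflexivity.
Qed.

Lemma iterates_comm (X : C) (g : hom X X) (it : hom (prod P X N) X) :
  iterates g it ->
  forall Z (x : hom Z X) (n : hom Z N),
    it ⊚ pair P (g ⊚ x) n = g ⊚ (it ⊚ pair P x n).
Proof.
  intros [H0 HS] Z x n.
  assert (Hcomm : it ⊚ pair P (g ⊚ p1 P) (p2 P) = g ⊚ it).
  { apply (pnno_rec_unique (a := g) (f := g ⊚ p2 P)); intros;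
      simpl_prod; rewrite ?H0, ?HS; simpl_prod; reflexivity. }
  transitivity (it ⊚ pair P (g ⊚ p1 P) (p2 P) ⊚ pair P x n).
  - simpl_prod. reflexivity.
  - rewrite Hcomm. simpl_prod. reflexivity.
Qed.

Lemma iterates_succ_zero_l (add : hom (prod P N N) N) :
  iterates s add -> forall Z (n : hom Z N), add ⊚ pair P (z ⊚ bang P Z) n = n.
Proof.
  intros [H0 HS] Z n.
  assert (Hzero : add ⊚ pair P (z ⊚ p1 P) (p2 P) = p2 P (A := one P)).
  { apply (pnno_rec_unique (a := z) (f := s ⊚ p2 P)); intros; simpl_prod;
      try reflexivity;
      replace p with (bang P Z0) by (symmetry; apply bang_unique);
      first [reflexivity | apply H0 | apply HS]. }
  transitivity (add ⊚ pair P (z ⊚ p1 P) (p2 P) ⊚ pair P (bang P Z) n).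
  - simpl_prod. reflexivity.
  - rewrite Hzero. simpl_prod. reflexivity.
Qed.
End Recursion.

Definition solves (C : Cat) (P : FinProd C) (A X : C) (m : hom (prod P A A) A)
    (c : hom X (prod P A X)) (u : hom X A) : Prop :=
  m ⊚ fprod P (idm A) u ⊚ c = u.

Lemma iterative_solves_unique (C : Cat) (P : FinProd C) (A X : C)
    (m : hom (prod P A A) A) (c : hom X (prod P A X)) (u1 u2 : hom X A) :
  iterative m -> solves m c u1 -> solves m c u2 -> u1 = u2.
Proof.
  intros Hit H1 H2. destruct (Hit X c) as [u [_ Hu]].
  rewrite <- (Hu u1 H1), <- (Hu u2 H2). reflexivity.
Qed.

Section Sequences.
Variables (C : Cat) (P : FinProd C) (N : C) (z : hom (one P) N) (s : hom N N)
  (E : Exponentials P N).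

Lemma head_comp (A Z Y : C) (x : hom Z (expo E A)) (h : hom Y Z) :
  head z x ⊚ h = head z (x ⊚ h).
Proof. unfold head, at_. simpl_prod. reflexivity. Qed.

Lemma shift_comp (A Z Y : C) (x : hom Z (expo E A)) (h : hom Y Z) :
  shift s x ⊚ h = shift s (x ⊚ h).
Proof. unfold shift. rewrite lam_comp. f_equal. simpl_prod. reflexivity. Qed.

Lemma mapseq_comp (A A' Z Y : C) (f : hom A A') (x : hom Z (expo E A))
    (h : hom Y Z) :
  mapseq f x ⊚ h = mapseq f (x ⊚ h).
Proof. unfold mapseq. rewrite lam_comp. f_equal. simpl_prod. reflexivity. Qed.

Definition seq_coalg (A : C) : hom (expo E A) (prod P A (expo E A)) :=
  pair P (head z (idm _)) (shift s (idm _)).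

Section Unfolding.
Variables (A : C) (m : hom (prod P A A) A) (M : hom (expo E A) A).

Lemma unfolding_solves_comp (X : C) (c : hom X (prod P A X))
    (h : hom X (expo E A)) :
  unfolding z s m M -> head z h = p1 P ⊚ c -> shift s h = h ⊚ (p2 P ⊚ c) ->
  solves m c (M ⊚ h).
Proof.
  intros HM Hhead Hshift. unfold solves.
  transitivity (m ⊚ pair P (head z h) (M ⊚ shift s h)).
  - rewrite Hhead, Hshift. simpl_prod. reflexivity.
  - symmetry. apply HM.
Qed.

Lemma unfolding_iff_solves : unfolding z s m M <-> solves m (seq_coalg A) M.
Proof.
  split.
  - intro HM. rewrite <- (comp_id_r M).
    apply unfolding_solves_comp; [exact HM | |];
      unfold seq_coalg; simpl_prod; reflexivity.
  - intros HM Z x. unfold solves in HM.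
    transitivity ((m ⊚ fprod P (idm A) M ⊚ seq_coalg A) ⊚ x).
    { rewrite HM. reflexivity. }
    unfold seq_coalg. simpl_prod.
    rewrite head_comp, shift_comp, !comp_id_l. reflexivity.
Qed.
End Unfolding.
End Sequences.

Ltac simpl_seq :=
  unfold head, shift, mapseq, at_; simpl_expo.

Section Iterative.
Variables (C : Cat) (P : FinProd C) (N : C) (z : hom (one P) N) (s : hom N N)
  (HN : is_PNNO z s) (E : Exponentials P N).
Variables (A : C) (m : hom (prod P A A) A).

Lemma iterative_unfolding_unique :
  iterative m -> exists! M : hom (expo E A) A, unfolding z s m M.
Proof.
  intro Hit. destruct (Hit _ (seq_coalg z s E A)) as [M [HM HMu]].
  exists M. split.
  - apply unfolding_iff_solves. exact HM.
  - intros M' HM'. apply HMu, unfolding_iff_solves, HM'.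
Qed.

Lemma iterative_canonicity (M : hom (expo E A) A) :
  iterative m -> unfolding z s m M -> canonicity z s m M.
Proof.
  intros Hit HM Z x y Hxy.
  destruct (iterates_exists HN s) as [add Hadd].
  pose proof Hadd as [Hadd0 HaddS].
  (* [c (p, i) = (x_i, (p, i+1))] *)
  set (c := pair P (at_ (x ⊚ p1 P) (p2 P)) (pair P (p1 P) (s ⊚ p2 P))
        : hom (prod P Z N) (prod P A (prod P Z N))).
  (* [tails (p, i) = (x_{i+j})_j] *)
  set (tails := lam E (ev E A ⊚ pair P (x ⊚ (p1 P ⊚ p1 P))
                                     (add ⊚ pair P (p2 P ⊚ p1 P) (p2 P)))).
  assert (Hy : solves m c (at_ (y ⊚ p1 P) (p2 P))).
  { unfold solves, c. simpl_prod. rewrite at_comp. simpl_prod.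
    symmetry. apply Hxy. }
  assert (Htails : solves m c (M ⊚ tails)).
  { eapply unfolding_solves_comp; [exact HM | |].
    - unfold c, tails. simpl_seq. rewrite Hadd0. reflexivity.
    - apply expo_ext. unfold c, tails. simpl_seq.
      rewrite HaddS, (iterates_comm HN Hadd). reflexivity. }
  assert (Htails0 : tails ⊚ pair P (idm Z) (z ⊚ bang P Z) = x).
  { apply expo_ext. unfold tails. simpl_seq.
    rewrite (iterates_succ_zero_l HN Hadd). reflexivity. }
  rewrite <- Htails0, comp_assoc, <- (iterative_solves_unique Hit Hy Htails).
  unfold head, at_. simpl_prod. reflexivity.
Qed.

Lemma unfolding_canonicity_iterative (M : hom (expo E A) A) :
  unfolding z s m M -> canonicity z s m M -> iterative m.
Proof.
  intros HM HC X c.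
  destruct (iterates_exists HN (p2 P ⊚ c)) as [it Hit].
  pose proof Hit as [Hit0 HitS].
  (* [traj p = (a_j)_j], where [c] sends the j-th state reached from [p]
     to [(a_j, next state)] *)
  set (traj := lam E (p1 P ⊚ (c ⊚ it))).
  exists (M ⊚ traj). split.
  - eapply unfolding_solves_comp; [exact HM | |].
    + unfold traj. simpl_seq. rewrite Hit0. simpl_prod. reflexivity.
    + apply expo_ext. unfold traj. simpl_seq.
      pose proof (iterates_comm HN Hit (p1 P) (p2 P)) as Hcomm.
      rewrite <- !comp_assoc, pair_p1_p2, comp_id_r in Hcomm.
      rewrite HitS. simpl_prod. rewrite Hcomm. reflexivity.
  - intros u Hu.
    assert (Hhead : head z (lam E (u ⊚ it)) = u).
    { simpl_seq. rewrite Hit0. apply comp_id_r. }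
    rewrite <- Hhead. symmetry. apply HC. intros W w i. unfold traj. simpl_seq.
    rewrite HitS.
    transitivity ((m ⊚ fprod P (idm A) u ⊚ c) ⊚ (it ⊚ pair P w i)).
    + rewrite Hu. reflexivity.
    + simpl_prod. reflexivity.
Qed.

Lemma midpoint_hom_unfolding_comm (A' : C) (m' : hom (prod P A' A') A')
    (M : hom (expo E A) A) (M' : hom (expo E A') A') (f : hom A A') :
  iterative m' -> unfolding z s m M -> unfolding z s m' M' ->
  is_midpoint_hom m m' f ->
  forall (Z : C) (x : hom Z (expo E A)), f ⊚ (M ⊚ x) = M' ⊚ mapseq f x.
Proof.
  intros Hit' HM HM' Hf Z x.
  set (c := pair P (f ⊚ head z (idm (expo E A))) (shift s (idm (expo E A)))).
  assert (HfM : solves m' c (f ⊚ M)).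
  { unfold solves, c.
    transitivity (f ⊚ (m ⊚ pair P (head z (idm _)) (M ⊚ shift s (idm _)))).
    - rewrite Hf. simpl_prod. reflexivity.
    - rewrite <- HM, comp_id_r. reflexivity. }
  assert (HM'f : solves m' c (M' ⊚ mapseq f (idm (expo E A)))).
  { eapply unfolding_solves_comp; [exact HM' | |]; unfold c.
    - simpl_seq. reflexivity.
    - apply expo_ext. simpl_seq. reflexivity. }
  rewrite comp_assoc, (iterative_solves_unique Hit' HfM HM'f), <- comp_assoc,
    mapseq_comp, comp_id_l.
  reflexivity.
Qed.
End Iterative.

Theorem mainTheorem1 (C : Cat) (P : FinProd C) (N : C)
  (z : hom (one P) N) (s : hom N N) (HN : is_PNNO z s)
  (E : Exponentials P N) :
  (forall (A : C) (m : hom (prod P A A) A),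
     is_midpoint m ->
     (iterative m <->
        exists M : hom (expo E A) A,
          unfolding z s m M /\ canonicity z s m M) /\
     (iterative m -> exists! M : hom (expo E A) A, unfolding z s m M)) /\
  (forall (A A' : C) (m : hom (prod P A A) A) (m' : hom (prod P A' A') A')
          (M : hom (expo E A) A) (M' : hom (expo E A') A') (f : hom A A'),
     is_midpoint m -> is_midpoint m' ->
     iterative m -> iterative m' ->
     unfolding z s m M -> unfolding z s m' M' ->
     is_midpoint_hom m m' f ->
     forall (Z : C) (x : hom Z (expo E A)),
       f ⊚ (M ⊚ x) = M' ⊚ mapseq f x).
Proof.
  split.
  - intros A m _. split; [split |].
    + intro Hit. destruct (iterative_unfolding_unique z s E Hit) as [M [HM _]].
      exists M. split; [exact HM | exact (iterative_canonicity HN Hit HM)].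
    + intros [M [HM HC]]. exact (unfolding_canonicity_iterative HN HM HC).
    + exact (iterative_unfolding_unique z s E (m := m)).
  - intros A A' m m' M M' f _ _ _ Hit' HM HM' Hf.
    exact (midpoint_hom_unfolding_comm Hit' HM HM' Hf).
Qed.
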